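(* For all integers $m,k\ge 1$, the vector $(m,2,k,1)$ is not 0-realizable.
   Context: All graphs are finite, nonempty, and reflexive (every vertex has a loop). $N[v]$ is the closed neighborhood of $v$ (including $v$). For distinct $v,w$, $w$ strictly corners $v$ if $N[v]\subsetneq N[w]$; $v$ is then a strict corner. A vertex dominates a set if adjacent to all its vertices. Corner ranking: set $G^{(1)}=G$, $k=1$. If $G^{(k)}$ is a clique, give all its vertices rank $k$ and stop. Else if $G^{(k)}$ has no strict corners, give all its vertices rank $\infty$ and stop. Else give every strict corner of $G^{(k)}$ rank $k$, delete them to get $G^{(k+1)}$ (induced subgraph), increase $k$ and repeat. The corner rank of $G$ is the largest rank of a vertex; $X_k$ is the set of rank-$k$ vertices. A graph is cop-win iff its corner rank is finite. A graph of finite corner rank $\alpha\ge2$ is of type 1 if some (equivalently every) vertex of rank $\alpha$ dominates $V(G^{(\alpha-1)})$, and of type 0 otherwise. The rank cardinality vector is $(x_\alpha,\dots,x_1)$ with $x_k=|X_k|$. A vector (finite list of positive integers) is 0-realizable if it is the rank cardinality vector of some cop-win graph of type 0. *)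

From mathcomp Require Import all_boot.
Set Implicit Arguments. Unset Strict Implicit. Unset Printing Implicit Defensive.

(* A (finite, reflexive) graph is given by a vertex type T : finType and an
   adjacency relation e : rel T, assumed reflexive (loops) and symmetric. *)
Section CornerRanking.
Variables (T : finType) (e : rel T).

Definition nbhd (S : {set T}) (v : T) : {set T} := [set u in S | e v u].

Definition is_clique (S : {set T}) : bool :=
  [forall u in S, forall v in S, e u v].

Definition strict_corners (S : {set T}) : {set T} :=
  [set v in S | [exists w in S, (w != v) && (nbhd S v \proper nbhd S w)]].

Definition next_stage (S : {set T}) : {set T} :=
  if is_clique S then set0 else S :\: strict_corners S.

(* G^{(k)} for k >= 1 (G^{(1)} = G) *)
Definition stage (k : nat) : {set T} := iter k.-1 next_stage [set: T].

Definition rank_set (k : nat) : {set T} :=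
  if k == 0 then set0 else
  [set v in stage k | is_clique (stage k) || (v \in strict_corners (stage k))].

Definition copwin : Prop := forall v : T, exists k, v \in rank_set k.

Definition corner_rank (alpha : nat) : Prop :=
  copwin /\ rank_set alpha != set0 /\
  (forall k v, v \in rank_set k -> k <= alpha).

Definition type1 (alpha : nat) : Prop :=
  exists2 v, v \in rank_set alpha & forall u, u \in stage alpha.-1 -> e v u.

(* rank cardinality vector (x_alpha, ..., x_1) *)
Definition rank_card_vector (alpha : nat) : seq nat :=
  [seq #|rank_set i| | i <- rev (iota 1 alpha)].

End CornerRanking.

(* s is 0-realizable: it is the rank cardinality vector of some cop-win graph
   (finite, nonempty, reflexive) of type 0, i.e. of finite corner rank
   alpha >= 2 and not of type 1. *)
Definition zero_realizable (s : seq nat) : Prop :=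
  exists (T : finType) (e : rel T),
    [/\ 0 < #|T|, reflexive e, symmetric e &
    exists alpha, [/\ corner_rank e alpha, 2 <= alpha, ~ type1 e alpha &
                      s = rank_card_vector e alpha]].

From mathcomp Require Import all_boot.
Set Implicit Arguments. Unset Strict Implicit. Unset Printing Implicit Defensive.

(* Write S1 = V(G) >= S2 >= S3 >= S4 for the stages, z for the only strict
   corner of G and a, b for the two strict corners of S3.  A domination inside
   S2 that z does not break would give G a second strict corner, so the strict
   corners of S2 are adjacent to z, their dominators avoid z and lie in S3, and
   the dominator of z yields some t in S3 adjacent to every strict corner of S2.
   Type 0 says every vertex of the clique S4 misses a or b; hence a and b are
   non-adjacent and each is strictly dominated in S3 by all its neighbours in
   S4.  If t lies in S4 it is adjacent to a or b, which is then already a strict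
   corner of S2; if t = b, a strict corner of S2 adjacent to a would have a
   dominator adjacent to both a and b, and without one a is again a strict
   corner of S2. *)

Section Neighbourhoods.
Variables (T : finType) (e : rel T).

Lemma strict_cornersP (S : {set T}) v :
  reflect (v \in S /\ exists2 w, w \in S & nbhd e S v \proper nbhd e S w)
          (v \in strict_corners e S).
Proof.
rewrite inE; apply: (iffP andP) => [[vS /exists_inP[w wS /andP[_ vw]]]|[vS [w wS vw]]].
  by split=> //; exists w.
split=> //; apply/exists_inP; exists w; rewrite // vw andbT.
by apply: contraTneq vw => ->; rewrite properxx.
Qed.

Lemma strict_corners_sub (S : {set T}) : strict_corners e S \subset S.
Proof. by apply/subsetP => v /strict_cornersP[]. Qed.

Lemma nbhd_subset_adj (S : {set T}) v w u :
  nbhd e S v \subset nbhd e S w -> u \in S -> e v u -> e w u.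
Proof.
move=> /subsetP vw uS vu.
have /vw : u \in nbhd e S v by rewrite inE uS.
by rewrite inE => /andP[].
Qed.

Lemma proper_nbhd_lift (S S' : {set T}) v w :
  S' \subset S -> nbhd e S' v \proper nbhd e S' w ->
  {in S :\: S', forall u, e v u -> e w u} -> nbhd e S v \proper nbhd e S w.
Proof.
move=> /subsetP S'S /properP[vw [y]]; rewrite !inE => /andP[yS' wy].
rewrite yS' /= => vy out; apply/properP; split; last first.
  by exists y; rewrite !inE S'S ?wy ?(negbTE vy) ?andbF.
apply/subsetP => u; rewrite !inE => /andP[uS vu]; rewrite uS /=.
have [uS'|uS'] := boolP (u \in S'); first exact: nbhd_subset_adj vw uS' vu.
by apply: out; rewrite // inE uS' uS.
Qed.

Lemma exists_noncorner (S : {set T}) :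
  S != set0 -> exists2 v, v \in S & v \notin strict_corners e S.
Proof.
case/set0Pn => v0 v0S; have [v vS vmax] := arg_maxnP (fun v => #|nbhd e S v|) v0S.
exists v => //; apply/strict_cornersP => -[_ [w wS /proper_card vw]].
by have /= := vmax w wS; rewrite leqNgt vw.
Qed.

End Neighbourhoods.

Section Ranking.
Variables (T : finType) (e : rel T).

Lemma next_stage_sub (S : {set T}) : next_stage e S \subset S.
Proof. by rewrite /next_stage; case: ifP => _; rewrite ?sub0set ?subsetDl. Qed.

Lemma stage_sub i j : i <= j -> stage e j \subset stage e i.
Proof.
apply: (@homo_leq _ (stage e) (fun A B => B \subset A)) => [A|B A C|[|n]] //.
- by move=> AB BC; apply: subset_trans BC AB.
- exact: next_stage_sub.
Qed.

Lemma stageS k : stage e k.+2 = next_stage e (stage e k.+1).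
Proof. by []. Qed.

Lemma stage_clique k : is_clique e (stage e k.+1) -> stage e k.+2 = set0.
Proof. by rewrite stageS /next_stage => ->. Qed.

Lemma stage_nonclique k : ~~ is_clique e (stage e k.+1) ->
  stage e k.+2 = stage e k.+1 :\: strict_corners e (stage e k.+1).
Proof. by rewrite stageS /next_stage => /negbTE->. Qed.

Lemma rank_set_clique k : is_clique e (stage e k.+1) -> rank_set e k.+1 = stage e k.+1.
Proof. by move=> cl; apply/setP => v; rewrite inE cl andbT. Qed.

Lemma rank_set_nonclique k : ~~ is_clique e (stage e k.+1) ->
  rank_set e k.+1 = strict_corners e (stage e k.+1).
Proof.
move=> /negbTE ncl; apply/setP => v; rewrite inE ncl /= andb_idl //.
exact/subsetP/strict_corners_sub.
Qed.

Lemma rank_set_sub k : rank_set e k \subset stage e k.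
Proof. by case: k => [|k]; apply/subsetP => v; rewrite inE // => /andP[]. Qed.

Lemma notin_rank_set_lt j n v : j < n -> v \in stage e n -> v \notin rank_set e j.
Proof.
case: j => [|j] jn vn; first by rewrite inE.
have : v \in stage e j.+2 by apply: subsetP vn; apply: stage_sub.
have [cl|ncl] := boolP (is_clique e (stage e j.+1)); first by rewrite stage_clique ?inE.
by rewrite stage_nonclique // rank_set_nonclique // inE => /andP[].
Qed.

Section CornerRank.
Variable alpha : nat.
Hypothesis rank_alpha : corner_rank e alpha.

Lemma corner_rank_predK : alpha = alpha.-1.+1.
Proof.
case: rank_alpha => _ [top_ne _]; rewrite prednK // lt0n.
by apply: contra_neq top_ne => ->.
Qed.

Lemma corner_rank_nonclique k : k.+1 < alpha -> ~~ is_clique e (stage e k.+1).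
Proof.
move=> lt_k; apply/negP => /stage_clique top_empty.
case: rank_alpha => _ [/set0Pn[v] + _] => /(subsetP (rank_set_sub alpha)).
by move/(subsetP (stage_sub lt_k)); rewrite top_empty inE.
Qed.

Lemma corner_rank_clique : is_clique e (stage e alpha).
Proof.
case: rank_alpha => copw [top_ne bnd]; apply/negPn/negP => ncl.
have stage_ne : stage e alpha != set0.
  by apply: contraNneq top_ne => top0; rewrite -subset0 -top0 rank_set_sub.
have [v v_top v_nc] := exists_noncorner e stage_ne; have [j vj] := copw v.
have := bnd j v vj; rewrite leq_eqVlt => /predU1P[jE|lt_j]; last first.
  by rewrite (negbTE (notin_rank_set_lt lt_j v_top)) in vj.
move: vj v_nc ncl; rewrite jE corner_rank_predK => + + ncl.
by rewrite rank_set_nonclique // => ->.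
Qed.

Lemma not_type1_nondominating : ~ type1 e alpha ->
  {in stage e alpha, forall v, exists2 u, u \in stage e alpha.-1 & ~~ e v u}.
Proof.
move=> nt1 v v_top.
have [/exists_inP //|/exists_inPn dom] := boolP [exists u in stage e alpha.-1, ~~ e v u].
case: nt1; exists v => [|u /dom /negPn //].
by move: corner_rank_clique v_top; rewrite corner_rank_predK => /rank_set_clique->.
Qed.

End CornerRank.
End Ranking.

Section RankFourConfiguration.
Variables (T : finType) (e : rel T).
Hypotheses (e_refl : reflexive e) (e_sym : symmetric e).
Variables (z : T) (S1 S2 S3 S4 : {set T}).
Hypothesis corners1 : strict_corners e S1 = [set z].
Hypothesis S2_def : S2 = S1 :\: strict_corners e S1.
Hypothesis S3_def : S3 = S2 :\: strict_corners e S2.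
Hypothesis S4_def : S4 = S3 :\: strict_corners e S3.
Hypothesis corners3_card : #|strict_corners e S3| = 2.
Hypothesis S4_clique : is_clique e S4.
Hypothesis S4_nondominating : {in S4, forall v, exists2 u, u \in S3 & ~~ e v u}.

Local Notation C2 := (strict_corners e S2).
Local Notation C3 := (strict_corners e S3).

Lemma S2_sub : S2 \subset S1. Proof. by rewrite S2_def subsetDl. Qed.
Lemma S3_sub : S3 \subset S2. Proof. by rewrite S3_def subsetDl. Qed.

Lemma S2_S1 : {subset S2 <= S1}. Proof. exact/subsetP/S2_sub. Qed.
Lemma S3_S2 : {subset S3 <= S2}. Proof. exact/subsetP/S3_sub. Qed.
Lemma S4_S3 : {subset S4 <= S3}. Proof. by move=> x; rewrite S4_def => /setDP[]. Qed.
Lemma C2_S2 : {subset C2 <= S2}. Proof. exact/subsetP/strict_corners_sub. Qed.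
Lemma C3_S3 : {subset C3 <= S3}. Proof. exact/subsetP/strict_corners_sub. Qed.

Lemma z_notin_S2 : z \notin S2.
Proof. by rewrite S2_def corners1 !inE eqxx. Qed.

Lemma S3_split x : x \in S3 -> (x \in S4) || (x \in C3).
Proof. by rewrite S4_def inE => ->; rewrite andbT orNb. Qed.

Lemma S4_adj : {in S4 &, forall x y, e x y}.
Proof. by move=> x y x4 y4; move/forall_inP/(_ x x4)/forall_inP/(_ y y4): S4_clique. Qed.

(* Otherwise the domination persists in S1 and c would be a strict corner of G. *)
Lemma corner2_dominator c w : c \in S2 -> w \in S2 ->
  nbhd e S2 c \proper nbhd e S2 w -> e c z && ~~ e w z.
Proof.
move=> c2 w2 cw; have [//|] := boolP (e c z && ~~ e w z).
rewrite negb_and negbK -implybE => /implyP cz_wz.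
have : c \in strict_corners e S1.
  apply/strict_cornersP; split; first exact: S2_S1.
  exists w; first exact: S2_S1.
  apply: proper_nbhd_lift S2_sub cw _ => u /setDP[uS1].
  by rewrite S2_def corners1 !inE uS1 andbT negbK => /eqP->.
by rewrite corners1 inE => /eqP c_z; move: z_notin_S2; rewrite -c_z c2.
Qed.

Lemma corner2_adj_z c : c \in C2 -> e c z.
Proof. by case/strict_cornersP => c2 [w w2 /(corner2_dominator c2 w2)/andP[]]. Qed.

Lemma corner2_dominator_S3 c w : c \in C2 -> w \in S2 ->
  nbhd e S2 c \proper nbhd e S2 w -> w \in S3.
Proof.
move=> cC2 w2 cw; have /andP[_ wz] := corner2_dominator (C2_S2 cC2) w2 cw.
by rewrite S3_def inE w2 andbT; apply: contraNN wz => /corner2_adj_z.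
Qed.

Lemma exists_dominator_C2 : exists2 t, t \in S3 & {in C2, forall c, e t c}.
Proof.
have /strict_cornersP[_ [u uS1 zu]] : z \in strict_corners e S1 by rewrite corners1 set11.
have u_C2 : {in C2, forall c, e u c}.
  move=> c cC2; apply: nbhd_subset_adj (proper_sub zu) (S2_S1 (C2_S2 cC2)) _.
  by rewrite e_sym corner2_adj_z.
have u2 : u \in S2.
  rewrite S2_def corners1 !inE uS1 andbT.
  by apply: contraTneq zu => ->; rewrite properxx.
have [uC2|uC2] := boolP (u \in C2); last by exists u; rewrite // S3_def inE uC2.
have /strict_cornersP[_ [w w2 uw]] := uC2.
exists w; first exact: corner2_dominator_S3 uC2 w2 uw.
by move=> c cC2; apply: nbhd_subset_adj (proper_sub uw) (C2_S2 cC2) (u_C2 c cC2).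
Qed.

Lemma S4_nonadj_C3 x : x \in S4 -> exists2 u, u \in C3 & ~~ e x u.
Proof.
move=> x4; have [u u3 xu] := S4_nondominating x4; exists u => //.
by case/orP: (S3_split u3) => // u4; rewrite S4_adj in xu.
Qed.

Section CornerPair.
Variables a b : T.
Hypotheses (aC3 : a \in C3) (bC3 : b \in C3) (a_neq_b : a != b).

Lemma C3_pair : C3 = [set a; b].
Proof.
apply/eqP; rewrite eq_sym eqEcard subUset !sub1set aC3 bC3.
by rewrite cards2 a_neq_b corners3_card.
Qed.

Lemma S4_adj_both x : x \in S4 -> e x a -> e x b -> False.
Proof.
move=> x4 xa xb; have [u] := S4_nonadj_C3 x4.
by rewrite C3_pair !inE => /orP[]/eqP->; rewrite ?xa ?xb.
Qed.

Lemma C3_dominated_by_adj : e a b -> nbhd e S3 a \proper nbhd e S3 b.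
Proof.
move=> ab; have /strict_cornersP[a3 [w w3 aw]] := aC3.
have wa := nbhd_subset_adj (proper_sub aw) a3 (e_refl a).
have wb := nbhd_subset_adj (proper_sub aw) (C3_S3 bC3) ab.
case/orP: (S3_split w3) => [w4|]; first by case: (S4_adj_both w4 wa wb).
rewrite C3_pair !inE => /orP[]/eqP w_eq; last by rewrite -w_eq.
by rewrite w_eq properxx in aw.
Qed.

End CornerPair.

Lemma C3_indep a b : a \in C3 -> b \in C3 -> a != b -> ~~ e a b.
Proof.
move=> aC3 bC3 ab; apply/negP => a_b.
have ba : b != a by rewrite eq_sym.
have b_a : e b a by rewrite e_sym.
have := proper_trans (C3_dominated_by_adj aC3 bC3 ab a_b)
                     (C3_dominated_by_adj bC3 aC3 ba b_a).
by rewrite properxx.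
Qed.

Lemma nbhd_S4_adj a x : a \in C3 -> x \in S4 -> e x a -> nbhd e S3 x = a |: S4.
Proof.
move=> aC3 x4 xa; apply/setP => y; rewrite !inE.
apply/andP/predU1P => [[y3 xy]|[->|y4]]; last first.
- by rewrite S4_S3 // S4_adj.
- by rewrite C3_S3.
case/orP: (S3_split y3) => [|yC3]; first by right.
left; apply/eqP; apply: contraT => ya.
by case: (S4_adj_both yC3 aC3 ya x4 xy xa).
Qed.

Lemma C3_dominator_S4 a w : a \in C3 -> w \in S3 ->
  nbhd e S3 a \proper nbhd e S3 w -> (w \in S4) && e w a.
Proof.
move=> aC3 w3 aw; have wa := nbhd_subset_adj (proper_sub aw) (C3_S3 aC3) (e_refl a).
rewrite wa andbT; case/orP: (S3_split w3) => // wC3.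
have wa_neq : w != a by apply: contraTneq aw => ->; rewrite properxx.
by move: (C3_indep wC3 aC3 wa_neq); rewrite wa.
Qed.

Lemma exists_S4_adj a : a \in C3 -> exists2 x, x \in S4 & e x a.
Proof.
move=> aC3; have /strict_cornersP[_ [w w3 aw]] := aC3.
by case/andP: (C3_dominator_S4 aC3 w3 aw) => w4 wa; exists w.
Qed.

Lemma C3_proper_S4 a x : a \in C3 -> x \in S4 -> e x a ->
  nbhd e S3 a \proper nbhd e S3 x.
Proof.
move=> aC3 x4 xa; have /strict_cornersP[_ [w w3 aw]] := aC3.
case/andP: (C3_dominator_S4 aC3 w3 aw) => w4 wa.
by rewrite (nbhd_S4_adj aC3 x4 xa) -(nbhd_S4_adj aC3 w4 wa).
Qed.

Lemma C2_separates a x : a \in C3 -> x \in S4 -> e x a ->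
  exists2 c, c \in C2 & e a c && ~~ e x c.
Proof.
move=> aC3 x4 xa.
have [/exists_inP //|/exists_inPn none] := boolP [exists c in C2, e a c && ~~ e x c].
have a3 := C3_S3 aC3; have : a \in C2.
  apply/strict_cornersP; split; first exact: S3_S2.
  exists x; first exact/S3_S2/S4_S3.
  apply: proper_nbhd_lift S3_sub (C3_proper_S4 aC3 x4 xa) _ => u /setDP[u2 u3].
  have uC2 : u \in C2 by move: u3; rewrite S3_def inE u2 andbT negbK.
  by move: (none u uC2); rewrite negb_and negbK -implybE => /implyP.
by move: a3; rewrite S3_def inE => /andP[/negP].
Qed.

Lemma S4_adj_C3 t : t \in S4 -> exists2 a, a \in C3 & e t a.
Proof.
move=> t4; have [/exists_inP //|/exists_inPn none] := boolP [exists a in C3, e t a].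
have /set0Pn[a aC3] : C3 != set0 by rewrite -card_gt0 corners3_card.
have [x x4 xa] := exists_S4_adj aC3.
have : t \in C3.
  apply/strict_cornersP; split; first exact: S4_S3.
  exists x; first exact: S4_S3.
  apply/properP; split; last first.
    by exists a; rewrite !inE ?C3_S3 ?xa ?(negbTE (none a aC3)) ?andbF.
  apply/subsetP => u; rewrite !inE => /andP[u3 tu]; rewrite u3 /=.
  case/orP: (S3_split u3) => [u4|uC3]; first exact: S4_adj.
  by move: (none u uC3); rewrite tu.
by move: t4; rewrite S4_def inE => /andP[/negP].
Qed.

Lemma C3_not_dominating_C2 b : b \in C3 -> ~ {in C2, forall c, e b c}.
Proof.
move=> bC3 b_C2.
have : 0 < #|C3 :\ b| by move: corners3_card; rewrite (cardsD1 b) bC3 add1n => -[->].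
case/card_gt0P => a /setD1P[ab aC3]; have [x x4 xa] := exists_S4_adj aC3.
have [c cC2 /andP[ac _]] := C2_separates aC3 x4 xa.
have /strict_cornersP[_ [w w2 cw]] := cC2.
have ca : e c a by rewrite e_sym.
have cb : e c b by rewrite e_sym b_C2.
have wa := nbhd_subset_adj (proper_sub cw) (S3_S2 (C3_S3 aC3)) ca.
have wb := nbhd_subset_adj (proper_sub cw) (S3_S2 (C3_S3 bC3)) cb.
case/orP: (S3_split (corner2_dominator_S3 cC2 w2 cw)) => [w4|wC3].
  by case: (S4_adj_both aC3 bC3 ab w4 wa wb).
have := C3_indep aC3 bC3 ab; move: wC3; rewrite (C3_pair aC3 bC3 ab) !inE.
by case/orP=> /eqP w_eq; [rewrite -w_eq wb | rewrite e_sym -w_eq wa].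
Qed.

Lemma rank_four_configuration_impossible : False.
Proof.
have [t t3 t_C2] := exists_dominator_C2.
case/orP: (S3_split t3) => [t4|tC3]; last exact: C3_not_dominating_C2 tC3 t_C2.
have [a aC3 ta] := S4_adj_C3 t4.
have [c cC2 /andP[_ /negP[]]] := C2_separates aC3 t4 ta.
exact: t_C2.
Qed.

End RankFourConfiguration.

Theorem theorem3p27 (m k : nat) : 1 <= m -> 1 <= k -> ~ zero_realizable [:: m; 2; k; 1].
Proof.
move=> _ _ [T [e [_ e_refl e_sym [alpha [rank4 _ not_type1 card_vec]]]]].
have alpha4 : alpha = 4.
  by move/(congr1 size): card_vec; rewrite size_map size_rev size_iota.
subst alpha; case: card_vec => _ card3 _ card1.
have nclique j : j < 3 -> ~~ is_clique e (stage e j.+1).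
  exact: corner_rank_nonclique rank4 j.
have [z corners1] : exists z, strict_corners e (stage e 1) = [set z].
  by apply/cards1P; rewrite -rank_set_nonclique ?nclique // -card1.
apply: (rank_four_configuration_impossible (S2 := stage e 2) (S3 := stage e 3)
          (S4 := stage e 4) e_refl e_sym corners1).
- by rewrite stage_nonclique ?nclique.
- by rewrite stage_nonclique ?nclique.
- by rewrite stage_nonclique ?nclique.
- by rewrite -rank_set_nonclique ?nclique // -card3.
- exact: corner_rank_clique.
- exact: not_type1_nondominating.
Qed.
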